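(* Let $H$ be a complex Hilbert space, $\varphi,\psi:[0,1]\to\mathbb{R}$ continuous, $A\in\mathbb{B}(H)$ and $t\in[0,1]$. Then $$\frac14\big(\min\{|\varphi(t)+\psi(t)|,|\varphi(t)-\psi(t)|\}\big)^2\|A^*A+AA^*\|\le\omega_t^2(\varphi,\psi;A)\le\frac12\big(\max\{|\varphi(t)+\psi(t)|,|\varphi(t)-\psi(t)|\}\big)^2\|A^*A+AA^*\|.$$
   Context: $S_1(H)$ is the unit sphere of $H$ and $\omega_t(\varphi,\psi;A)=\sup_{x\in S_1(H)}|\langle(\varphi(t)A+\psi(t)A^* )x,x\rangle|$. *)

From HB Require Import structures.
From mathcomp Require Import all_boot all_order all_algebra.
From mathcomp Require Import all_classical all_reals all_analysis.
From mathcomp Require Import complex.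
Set Implicit Arguments. Unset Strict Implicit. Unset Printing Implicit Defensive.
Import Order.TTheory GRing.Theory Num.Theory.
Import numFieldNormedType.Exports.
Local Open Scope ring_scope.
Local Open Scope classical_set_scope.

Section Hilbert.
Variable R : realType.
Variable V : lmodType R[i].
Variable ip : V -> V -> R[i].

Definition hnorm (x : V) : R := Num.sqrt (complex.Re (ip x x)).

Definition is_hilbert : Prop :=
  [/\ (forall (a : R[i]) (x y z : V), ip (a *: x + y) z = a * ip x z + ip y z),
      (forall x y : V, ip y x = (ip x y)^*%C),
      (forall x : V, 0 <= ip x x),
      (forall x : V, ip x x = 0 -> x = 0) &
      (forall u : nat -> V,
         (forall e : R, 0 < e -> exists N : nat, forall m n : nat,
              (N <= m)%N -> (N <= n)%N -> hnorm (u m - u n) < e) ->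
         exists l : V, forall e : R, 0 < e -> exists N : nat, forall n : nat,
              (N <= n)%N -> hnorm (u n - l) < e)].

Definition bounded_op (A : V -> V) : Prop :=
  (forall (a : R[i]) (x y : V), A (a *: x + y) = a *: A x + A y) /\
  exists M : R, forall x : V, hnorm (A x) <= M * hnorm x.

Definition is_adjoint (A B : V -> V) : Prop :=
  forall x y : V, ip (A x) y = ip x (B y).

Definition unit_sphere : set V := [set x | hnorm x = 1].

Definition opnorm (T : V -> V) : R := sup [set hnorm (T x) | x in unit_sphere].

Definition omega_t (phi psi : R -> R) (t : R) (A Astar : V -> V) : R :=
  sup [set complex.Re `|ip ((phi t)%:C%C *: A x + (psi t)%:C%C *: Astar x) x|
      | x in unit_sphere].

End Hilbert.

From mathcomp Require Import all_boot all_order all_algebra.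
From mathcomp Require Import all_classical all_reals all_analysis.
From mathcomp Require Import complex.
From mathcomp Require Import ring lra.
Import Order.TTheory GRing.Theory Num.Theory.
Import numFieldNormedType.Exports.
Local Open Scope ring_scope.
Local Open Scope classical_set_scope.
Set Implicit Arguments. Unset Strict Implicit.

(* Write w = <A x, x> and W(A) for the numerical radius. For real a, b,
   <(a A + b A^* ) x, x> = a w + b conj(w) has squared modulus
   (a + b)^2 (Re w)^2 + (a - b)^2 (Im w)^2, which lies between m^2 |w|^2 and
   M^2 |w|^2; hence m W(A) <= omega_t <= M W(A), and the theorem reduces to
   Kittaneh's bounds ||A^*A + AA^*|| / 4 <= W(A)^2 <= ||A^*A + AA^*|| / 2.
   Upper bound: by Cauchy-Schwarz |<A x, x>|^2 is at most both ||A x||^2 and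
   ||A^* x||^2, whose sum is <(A^*A + AA^* ) x, x>.  Lower bound: the real and
   imaginary parts Re A, Im A are self-adjoint with numerical radius at most
   W(A), hence (by polarization) norm at most W(A), and the parallelogram law
   gives ||A x||^2 + ||A^* x||^2 = 2 (||Re A x||^2 + ||Im A x||^2). *)

Local Notation normc := (@Normc.normc _).
Local Notation Re := (@complex.Re _).
Local Notation Im := (@complex.Im _).

Lemma le_of_sqr_le (R : realDomainType) (x y : R) : 0 <= y -> x ^+ 2 <= y ^+ 2 -> x <= y.
Proof. by move=> y0 h; nra. Qed.

Section ComplexModulus.
Variable R : rcfType.
Implicit Types (z w : R[i]) (a b k : R).

Lemma normc_ge0 z : 0 <= normc z.
Proof. by case: z => x y; exact: sqrtr_ge0. Qed.

Lemma normc_sqr z : normc z ^+ 2 = Re z ^+ 2 + Im z ^+ 2.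
Proof. by case: z => x y /=; rewrite sqr_sqrtr // addr_ge0 ?sqr_ge0. Qed.

Lemma normc_real k : normc k%:C%C = `|k|.
Proof. by rewrite /= expr0n addr0 sqrtr_sqr. Qed.

Lemma normc_i : normc ('i%C : R[i]) = 1.
Proof. by rewrite /= expr0n expr1n add0r sqrtr1. Qed.

Lemma normcNi : normc (- 'i%C : R[i]) = 1.
Proof. by rewrite /= oppr0 expr0n sqrrN expr1n add0r sqrtr1. Qed.

Lemma ler_normc_Re z : `|Re z| <= normc z.
Proof.
apply: le_of_sqr_le; first exact: normc_ge0.
rewrite real_normK ?num_real // normc_sqr.
by rewrite lerDl sqr_ge0.
Qed.

Lemma normc_conj_comb a b w :
  normc (a%:C%C * w + b%:C%C * w^*%C) ^+ 2 =
  (a + b) ^+ 2 * Re w ^+ 2 + (a - b) ^+ 2 * Im w ^+ 2.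
Proof. by case: w => x y; rewrite normc_sqr /=; ring. Qed.

Lemma normc_conj_comb_le a b w (M : R) :
  `|a + b| <= M -> `|a - b| <= M ->
  normc (a%:C%C * w + b%:C%C * w^*%C) <= M * normc w.
Proof.
move=> hp hm; have M0 : 0 <= M := le_trans (normr_ge0 _) hp.
apply: le_of_sqr_le; first by rewrite mulr_ge0 ?normc_ge0.
rewrite normc_conj_comb exprMn normc_sqr.
rewrite -(real_normK (num_real (a + b))) -(real_normK (num_real (a - b))).
have {}hp := lerXn2r 2 (normr_ge0 _) M0 hp; have {}hm := lerXn2r 2 (normr_ge0 _) M0 hm.
have := sqr_ge0 (Re w); have := sqr_ge0 (Im w); nra.
Qed.

Lemma normc_conj_comb_ge a b w (m : R) :
  0 <= m -> m <= `|a + b| -> m <= `|a - b| ->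
  m * normc w <= normc (a%:C%C * w + b%:C%C * w^*%C).
Proof.
move=> m0 hp hm.
apply: le_of_sqr_le; first exact: normc_ge0.
rewrite normc_conj_comb exprMn normc_sqr.
rewrite -(real_normK (num_real (a + b))) -(real_normK (num_real (a - b))).
have {}hp := lerXn2r 2 m0 (normr_ge0 _) hp; have {}hm := lerXn2r 2 m0 (normr_ge0 _) hm.
have := sqr_ge0 (Re w); have := sqr_ge0 (Im w); nra.
Qed.

End ComplexModulus.

Section SupImage.
Variables (R : realType) (T : Type) (D : set T) (f : T -> R) (c : R).
Hypothesis f_le : forall x, D x -> f x <= c.

(* [sup set0 = 0], whence the hypothesis [0 <= c]. *)
Lemma sup_image_le : 0 <= c -> sup [set f x | x in D] <= c.
Proof.
move=> c0; have [->|/set0P[x Dx]] := eqVneq D set0.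
  by rewrite image_set0 sup0.
by apply: ge_sup; [exists (f x), x | move=> _ [y Dy <-]; exact: f_le].
Qed.

Lemma le_sup_image x : D x -> f x <= sup [set f x | x in D].
Proof. by move=> Dx; apply: ub_le_sup; [exists c => _ [y Dy <-]; exact: f_le | exists x]. Qed.

Lemma sup_image_ge0 : (forall x, D x -> 0 <= f x) -> 0 <= sup [set f x | x in D].
Proof.
move=> f0; have [->|/set0P[x Dx]] := eqVneq D set0; first by rewrite image_set0 sup0.
exact: le_trans (f0 x Dx) (le_sup_image Dx).
Qed.

End SupImage.

Section LinearMap.
Variables (K : pzRingType) (U W : lmodType K) (f : U -> W).
Hypothesis f_lin : linear f.

Lemma linear_fun0 : f 0 = 0.
Proof.
have h := f_lin 1 0 0; rewrite !scale1r addr0 in h.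
by apply: (addrI (f 0)); rewrite addr0 -h.
Qed.

Lemma linear_funD x y : f (x + y) = f x + f y.
Proof. by have := f_lin 1 x y; rewrite !scale1r. Qed.

Lemma linear_funZ a x : f (a *: x) = a *: f x.
Proof. by rewrite -[a *: x]addr0 f_lin linear_fun0 addr0. Qed.

Lemma linear_funB x y : f (x - y) = f x - f y.
Proof. by rewrite linear_funD -scaleN1r linear_funZ scaleN1r. Qed.

End LinearMap.

Section InnerProduct.
Variables (R : realType) (V : lmodType R[i]) (ip : V -> V -> R[i]).
Hypothesis ipH : is_hilbert ip.
Implicit Types (x y z : V) (a : R[i]).

Definition sqnorm x : R := Re (ip x x).

Lemma ip_conj x y : ip y x = (ip x y)^*%C.
Proof. by case: ipH. Qed.

Lemma ipD_l x y z : ip (x + y) z = ip x z + ip y z.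
Proof. by case: ipH => lin _ _ _ _; rewrite -[x]scale1r lin mul1r scale1r. Qed.

Lemma ipZ_l a x z : ip (a *: x) z = a * ip x z.
Proof.
case: ipH => lin _ _ _ _; have ip0 := lin 1 0 0 z; rewrite scale1r addr0 mul1r in ip0.
have {}ip0 : ip 0 z = 0 by apply: (addrI (ip 0 z)); rewrite addr0 -ip0.
by rewrite -[a *: x]addr0 lin ip0 addr0.
Qed.

Lemma ipN_l x z : ip (- x) z = - ip x z.
Proof. by rewrite -scaleN1r ipZ_l mulN1r. Qed.

Lemma ipB_l x y z : ip (x - y) z = ip x z - ip y z.
Proof. by rewrite ipD_l ipN_l. Qed.

Lemma ipD_r x y z : ip z (x + y) = ip z x + ip z y.
Proof. by rewrite ip_conj ipD_l rmorphD /= -!ip_conj. Qed.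

Lemma ipZ_r a x z : ip z (a *: x) = a^*%C * ip z x.
Proof. by rewrite ip_conj ipZ_l rmorphM /= -!ip_conj. Qed.

Lemma ipB_r x y z : ip z (x - y) = ip z x - ip z y.
Proof. by rewrite ip_conj ipB_l rmorphB /= -!ip_conj. Qed.

Lemma ip0_r z : ip z 0 = 0.
Proof. by rewrite -(subrr z) ipB_r subrr. Qed.

Lemma ip_self x : ip x x = (sqnorm x)%:C%C.
Proof.
case: ipH => _ _ /(_ x); rewrite /sqnorm; case: (ip x x) => u v.
by rewrite lecE /= => /andP[/eqP ->].
Qed.

Lemma sqnorm_ge0 x : 0 <= sqnorm x.
Proof. by case: ipH => _ _ /(_ x); rewrite lecE => /andP[]. Qed.

Lemma sqnorm_eq0 x : sqnorm x = 0 -> x = 0.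
Proof. by case: ipH => _ _ _ ip_def _ x0; apply: ip_def; rewrite ip_self x0. Qed.

Lemma hnorm_ge0 x : 0 <= hnorm ip x.
Proof. exact: sqrtr_ge0. Qed.

Lemma hnorm_sqr x : hnorm ip x ^+ 2 = sqnorm x.
Proof. by rewrite sqr_sqrtr // sqnorm_ge0. Qed.

Lemma sqnorm_unit x : unit_sphere ip x -> sqnorm x = 1.
Proof. by rewrite -hnorm_sqr => ->; rewrite expr1n. Qed.

Lemma sqnormZ a x : sqnorm (a *: x) = normc a ^+ 2 * sqnorm x.
Proof.
rewrite /sqnorm ipZ_l ipZ_r ip_self normc_sqr.
by case: a => u v /=; ring.
Qed.

Lemma sqnorm_parallelogram x y :
  sqnorm (x + y) + sqnorm (x - y) = 2 * sqnorm x + 2 * sqnorm y.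
Proof.
rewrite /sqnorm ipB_l ipD_l !ipB_r !ipD_r !ip_self (ip_conj x y).
by case: (ip x y) => u v /=; ring.
Qed.

Lemma normc_ip_sqr_le x y : normc (ip x y) ^+ 2 <= sqnorm x * sqnorm y.
Proof.
have [y0|ny0] := eqVneq (sqnorm y) 0.
  by rewrite y0 mulr0 (sqnorm_eq0 y0) ip0_r Normc.normc0 expr0n.
have ny_gt0 : 0 < sqnorm y by rewrite lt_def ny0 sqnorm_ge0.
pose w := ip x y.
have expand : sqnorm ((sqnorm y)%:C%C *: x - w *: y)
    = sqnorm y * (sqnorm y * sqnorm x - normc w ^+ 2).
  rewrite /sqnorm ipB_l !ipB_r !ipZ_l !ipZ_r !ip_self (ip_conj x y) -/w normc_sqr.
  by case: w => u v /=; ring.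
have := sqnorm_ge0 ((sqnorm y)%:C%C *: x - w *: y).
by rewrite expand pmulr_rge0 // subr_ge0 mulrC.
Qed.

Lemma normc_ip_le x y : normc (ip x y) <= hnorm ip x * hnorm ip y.
Proof.
apply: le_of_sqr_le; first by rewrite mulr_ge0 ?hnorm_ge0.
by rewrite exprMn !hnorm_sqr normc_ip_sqr_le.
Qed.

Lemma sqnorm_le_of_hnorm_le x y (M : R) :
  hnorm ip x <= M * hnorm ip y -> sqnorm x <= M ^+ 2 * sqnorm y.
Proof.
move=> h; rewrite -!hnorm_sqr -exprMn.
by rewrite lerXn2r ?nnegrE ?hnorm_ge0 // (le_trans (hnorm_ge0 x) h).
Qed.

Section SelfAdjoint.
Variables (S : V -> V) (c : R).
Hypotheses (S_lin : linear S) (S_sa : is_adjoint ip S S) (c0 : 0 <= c).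
Hypothesis S_numrange : forall z, normc (ip (S z) z) <= c * sqnorm z.

Lemma selfadjoint_polarization x y :
  4 * Re (ip (S x) y) = Re (ip (S (x + y)) (x + y)) - Re (ip (S (x - y)) (x - y)).
Proof.
rewrite (linear_funB S_lin) (linear_funD S_lin) ipB_l ipD_l !ipB_r !ipD_r.
rewrite (S_sa y x) (ip_conj (S x) y).
by case: (ip (S x) y) => u v; case: (ip (S x) x) => ? ?; case: (ip (S y) y) => ? ? /=; ring.
Qed.

Lemma selfadjoint_re_ip_le x y : 2 * Re (ip (S x) y) <= c * (sqnorm x + sqnorm y).
Proof.
suff : 4 * Re (ip (S x) y) <= 2 * (c * (sqnorm x + sqnorm y)) by lra.
rewrite selfadjoint_polarization.
have /ler_normlP[_ hp] := le_trans (ler_normc_Re _) (S_numrange (x + y)).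
have /ler_normlP[hm _] := le_trans (ler_normc_Re _) (S_numrange (x - y)).
have par : c * sqnorm (x + y) + c * sqnorm (x - y) = 2 * (c * (sqnorm x + sqnorm y)).
  by rewrite -mulrDr sqnorm_parallelogram; ring.
lra.
Qed.

Lemma selfadjoint_sqnorm_le x : sqnorm (S x) <= c ^+ 2 * sqnorm x.
Proof.
have [c_eq0|c_neq0] := eqVneq c 0.
  have := selfadjoint_re_ip_le x (S x); rewrite c_eq0 !mul0r -/(sqnorm (S x)).
  by rewrite expr0n mul0r pmulr_rle0.
have c_gt0 : 0 < c by rewrite lt_def c_neq0 c0.
have := selfadjoint_re_ip_le (c%:C%C *: x) (S x).
rewrite (linear_funZ S_lin) ipZ_l ip_self sqnormZ normc_real real_normK ?num_real //=.
rewrite mul0r subr0 => h.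
rewrite -(ler_pM2l c_gt0); nra.
Qed.

Lemma selfadjoint_hnorm_le x : hnorm ip (S x) <= c * hnorm ip x.
Proof.
apply: le_of_sqr_le; first by rewrite mulr_ge0 ?hnorm_ge0.
by rewrite exprMn !hnorm_sqr selfadjoint_sqnorm_le.
Qed.

End SelfAdjoint.

End InnerProduct.

Definition numrad (R : realType) (V : lmodType R[i]) (ip : V -> V -> R[i]) (B : V -> V) : R :=
  sup [set normc (ip (B x) x) | x in unit_sphere ip].

Section Adjoint.
Variables (R : realType) (V : lmodType R[i]) (ip : V -> V -> R[i]).
Hypothesis ipH : is_hilbert ip.
Variables A Astar : V -> V.
Hypotheses (A_lin : linear A) (adjA : is_adjoint ip A Astar).
Implicit Types (x y z : V) (c : R[i]).

Lemma ip_adjoint_l x y : ip (Astar x) y = ip x (A y).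
Proof. by rewrite (ip_conj ipH) -adjA -(ip_conj ipH). Qed.

Lemma ip_adjoint_self z : ip (Astar z) z = (ip (A z) z)^*%C.
Proof. by rewrite ip_adjoint_l (ip_conj ipH). Qed.

Lemma adjoint_linear : linear Astar.
Proof.
move=> a x y; pose d := Astar (a *: x + y) - (a *: Astar x + Astar y).
have d_orth w : ip w d = 0.
  by rewrite /d (ipB_r ipH) (ipD_r ipH) (ipZ_r ipH) -!adjA (ipD_r ipH) (ipZ_r ipH) subrr.
by apply/eqP; rewrite -subr_eq0; apply/eqP/(sqnorm_eq0 ipH); rewrite /sqnorm d_orth.
Qed.

(* [re_part c] is Re (c A); Re A = [re_part 1] and Im A = [re_part (-i)]. *)
Definition re_part c z := (2^-1 : R)%:C%C *: (c *: A z + c^*%C *: Astar z).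

Lemma re_part_linear c : linear (re_part c).
Proof.
move=> a x y; rewrite /re_part A_lin adjoint_linear !scalerDr !scalerA.
by rewrite [_ * c * a]mulrC [_ * c^*%C * a]mulrC addrACA !mulrA.
Qed.

Lemma re_part_selfadjoint c : is_adjoint ip (re_part c) (re_part c).
Proof.
move=> x y; rewrite /re_part (ipZ_l ipH) (ipZ_r ipH) conjc_real (ipD_l ipH) (ipD_r ipH).
by rewrite !(ipZ_l ipH) !(ipZ_r ipH) conjcK adjA ip_adjoint_l addrC.
Qed.

Lemma ip_re_part c z : ip (re_part c z) z = (Re (c * ip (A z) z))%:C%C.
Proof.
rewrite /re_part (ipZ_l ipH) (ipD_l ipH) !(ipZ_l ipH) ip_adjoint_self.
case: c => u v; case: (ip (A z) z) => p q.
by apply/eqP; rewrite eq_complex /=; apply/andP; split; apply/eqP; field.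
Qed.

Lemma re_part_add_i z : re_part 1 z + 'i%C *: re_part (- 'i%C) z = A z.
Proof.
rewrite /re_part !scalerDr !scalerA addrACA -!scalerDl.
transitivity (1 *: A z + 0 *: Astar z); last by rewrite scale1r scale0r addr0.
by congr (_ *: _ + _ *: _); apply/eqP; rewrite eq_complex /=; apply/andP; split; apply/eqP; field.
Qed.

Lemma re_part_sub_i z : re_part 1 z - 'i%C *: re_part (- 'i%C) z = Astar z.
Proof.
rewrite /re_part -scaleNr !scalerDr !scalerA addrACA -!scalerDl.
transitivity (0 *: A z + 1 *: Astar z); last by rewrite scale1r scale0r add0r.
by congr (_ *: _ + _ *: _); apply/eqP; rewrite eq_complex /=; apply/andP; split; apply/eqP; field.
Qed.

Lemma sqnorm_add_adjoint z :
  sqnorm ip (A z) + sqnorm ip (Astar z) =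
  2 * (sqnorm ip (re_part 1 z) + sqnorm ip (re_part (- 'i%C) z)).
Proof.
rewrite -{1}re_part_add_i -re_part_sub_i (sqnorm_parallelogram ipH).
by rewrite (sqnormZ ipH) normc_i expr1n mul1r mulrDr.
Qed.

Definition sym_prod z := Astar (A z) + A (Astar z).

Lemma sym_prod_linear : linear sym_prod.
Proof. by move=> a x y; rewrite /sym_prod A_lin !adjoint_linear A_lin scalerDr addrACA. Qed.

Lemma sym_prod_selfadjoint : is_adjoint ip sym_prod sym_prod.
Proof.
move=> x y; rewrite /sym_prod (ipD_l ipH) (ipD_r ipH) ip_adjoint_l adjA.
by rewrite adjA -ip_adjoint_l addrC.
Qed.

Lemma ip_sym_prod z : ip (sym_prod z) z = (sqnorm ip (A z) + sqnorm ip (Astar z))%:C%C.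
Proof. by rewrite /sym_prod (ipD_l ipH) adjA ip_adjoint_l !(ip_self ipH) rmorphD. Qed.

Section Bounded.
Variable M : R.
Hypothesis A_bdd : forall x, hnorm ip (A x) <= M * hnorm ip x.

Lemma adjoint_hnorm_le y : hnorm ip (Astar y) <= M * hnorm ip y.
Proof.
have h1 : sqnorm ip (Astar y) <= M * hnorm ip (Astar y) * hnorm ip y.
  rewrite /sqnorm -adjA; apply: le_trans (ler_norm _) (le_trans (ler_normc_Re _) _).
  apply: le_trans (normc_ip_le ipH _ _) _.
  by rewrite ler_wpM2r ?hnorm_ge0.
have := A_bdd y; have := hnorm_ge0 ip (A y); have := hnorm_ge0 ip y.
have := hnorm_ge0 ip (Astar y); rewrite -(hnorm_sqr ipH) in h1; nra.
Qed.

Lemma normc_ip_unit_le u : unit_sphere ip u -> normc (ip (A u) u) <= M.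
Proof.
move=> u1; apply: le_trans (normc_ip_le ipH _ _) _.
by have := A_bdd u; rewrite u1 !mulr1.
Qed.

Lemma sym_prod_hnorm_le x : hnorm ip (sym_prod x) <= (M ^+ 2 + M ^+ 2) * hnorm ip x.
Proof.
apply: (selfadjoint_hnorm_le ipH sym_prod_linear sym_prod_selfadjoint).
  by rewrite addr_ge0 ?sqr_ge0.
move=> z; rewrite ip_sym_prod normc_real ger0_norm ?addr_ge0 ?sqnorm_ge0 // mulrDl.
by rewrite lerD // (sqnorm_le_of_hnorm_le ipH) // adjoint_hnorm_le.
Qed.

Lemma numrad_ge0 : 0 <= numrad ip A.
Proof. by apply: sup_image_ge0 normc_ip_unit_le _ => x _; exact: normc_ge0. Qed.

Lemma le_numrad u : unit_sphere ip u -> normc (ip (A u) u) <= numrad ip A.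
Proof. exact: (le_sup_image (f := fun x => normc (ip (A x) x)) normc_ip_unit_le). Qed.

Lemma sym_prod_le_opnorm u : unit_sphere ip u -> hnorm ip (sym_prod u) <= opnorm ip sym_prod.
Proof.
apply: (le_sup_image (f := fun x => hnorm ip (sym_prod x)) (c := M ^+ 2 + M ^+ 2)) => {}u u1.
by have := sym_prod_hnorm_le u; rewrite u1 mulr1.
Qed.

Lemma normc_ip_le_numrad z : normc (ip (A z) z) <= numrad ip A * sqnorm ip z.
Proof.
have [z0|nz0] := eqVneq (sqnorm ip z) 0.
  by rewrite z0 mulr0 (sqnorm_eq0 ipH z0) (linear_fun0 A_lin) (ip0_r ipH) Normc.normc0.
pose h := hnorm ip z.
have h_gt0 : 0 < h by rewrite sqrtr_gt0 lt_def nz0 sqnorm_ge0.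
pose u := (h^-1)%:C%C *: z.
have u1 : unit_sphere ip u.
  rewrite /unit_sphere /= /hnorm -/(sqnorm ip u) (sqnormZ ipH) normc_real.
  by rewrite -(hnorm_sqr ipH) -/h ger0_norm ?invr_ge0 ?ltW // exprVn mulVf ?sqrtr1 // expf_neq0 // gt_eqF.
have -> : z = h%:C%C *: u by rewrite /u scalerA -rmorphM mulfV ?gt_eqF // scale1r.
rewrite (linear_funZ A_lin) (ipZ_l ipH) (ipZ_r ipH) conjc_real mulrA -rmorphM Normc.normcM.
rewrite (sqnormZ ipH) !normc_real (sqnorm_unit ipH u1) mulr1.
rewrite ger0_norm ?mulr_ge0 ?(ltW h_gt0) // real_normK ?num_real // -expr2 mulrC.
by rewrite ler_wpM2r ?sqr_ge0 // le_numrad.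
Qed.

Lemma opnorm_sym_prod_ge0 : 0 <= opnorm ip sym_prod.
Proof.
apply: (sup_image_ge0 (f := fun x => hnorm ip (sym_prod x)) (c := M ^+ 2 + M ^+ 2)).
  by move=> u u1; have := sym_prod_hnorm_le u; rewrite u1 mulr1.
by move=> x _; exact: hnorm_ge0.
Qed.

Lemma numrad_sqr_le : numrad ip A ^+ 2 <= 2^-1 * opnorm ip sym_prod.
Proof.
have N0 := opnorm_sym_prod_ge0; set N := opnorm ip sym_prod in N0 *.
have numrange_sqr u : unit_sphere ip u -> normc (ip (A u) u) ^+ 2 <= 2^-1 * N.
  move=> u1; have := normc_ip_sqr_le ipH (A u) u.
  have := normc_ip_sqr_le ipH u (Astar u); rewrite -adjA (sqnorm_unit ipH u1) mulr1 mul1r.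
  have : sqnorm ip (A u) + sqnorm ip (Astar u) <= N.
    rewrite -[_ + _]ger0_norm ?addr_ge0 ?sqnorm_ge0 // -normc_real -ip_sym_prod.
    apply: le_trans (normc_ip_le ipH _ _) _; rewrite u1 mulr1.
    exact: sym_prod_le_opnorm.
  lra.
have : numrad ip A <= Num.sqrt (2^-1 * N).
  apply: sup_image_le; last exact: sqrtr_ge0.
  move=> u u1; apply: le_of_sqr_le; first exact: sqrtr_ge0.
  by rewrite sqr_sqrtr ?mulr_ge0 ?invr_ge0 // numrange_sqr.
move/(lerXn2r 2 numrad_ge0 (sqrtr_ge0 _)).
by rewrite sqr_sqrtr // mulr_ge0 ?invr_ge0.
Qed.

Lemma opnorm_le_numrad : opnorm ip sym_prod <= 4 * numrad ip A ^+ 2.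
Proof.
have re_part_sqnorm c : normc c = 1 ->
    forall z, sqnorm ip (re_part c z) <= numrad ip A ^+ 2 * sqnorm ip z.
  move=> c1; apply: (selfadjoint_sqnorm_le ipH (re_part_linear c) (re_part_selfadjoint c) numrad_ge0).
  move=> z; rewrite ip_re_part normc_real; apply: le_trans (ler_normc_Re _) _.
  by rewrite Normc.normcM c1 mul1r normc_ip_le_numrad.
have sym_prod_numrange z :
    normc (ip (sym_prod z) z) <= 4 * numrad ip A ^+ 2 * sqnorm ip z.
  rewrite ip_sym_prod normc_real ger0_norm ?addr_ge0 ?sqnorm_ge0 // sqnorm_add_adjoint.
  have := re_part_sqnorm 1 (Normc.normc1 R) z.
  have := re_part_sqnorm (- 'i%C) (normcNi R) z.
  lra.
have c0 : 0 <= 4 * numrad ip A ^+ 2 by rewrite mulr_ge0 ?sqr_ge0.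
apply: (sup_image_le _ c0) => u u1.
have := selfadjoint_hnorm_le ipH sym_prod_linear sym_prod_selfadjoint c0 sym_prod_numrange u.
by rewrite u1 mulr1.
Qed.

Section ConjugateCombination.
Variables a b : R.
Let T x := a%:C%C *: A x + b%:C%C *: Astar x.

Lemma ip_conj_comb z : ip (T z) z = a%:C%C * ip (A z) z + b%:C%C * (ip (A z) z)^*%C.
Proof. by rewrite /T (ipD_l ipH) !(ipZ_l ipH) ip_adjoint_self. Qed.

Lemma numrad_conj_comb_le (K : R) : `|a + b| <= K -> `|a - b| <= K ->
  numrad ip T <= K * numrad ip A.
Proof.
move=> ha hb; have K0 := le_trans (normr_ge0 _) ha.
apply: sup_image_le; last by rewrite mulr_ge0 ?numrad_ge0.
move=> u u1; rewrite ip_conj_comb; apply: le_trans (normc_conj_comb_le _ ha hb) _.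
by rewrite ler_wpM2l // le_numrad.
Qed.

Lemma numrad_conj_comb_ge (m : R) : 0 <= m -> m <= `|a + b| -> m <= `|a - b| ->
  m * numrad ip A <= numrad ip T.
Proof.
move=> m0 ha hb.
pose K := `|a + b| + `|a - b|.
have T_bound u : unit_sphere ip u -> normc (ip (T u) u) <= K * M.
  have hK1 : `|a + b| <= K by rewrite lerDl.
  have hK2 : `|a - b| <= K by rewrite lerDr.
  move=> u1; rewrite ip_conj_comb; apply: le_trans (normc_conj_comb_le _ hK1 hK2) _.
  by rewrite ler_wpM2l ?addr_ge0 // normc_ip_unit_le.
have [->|m_neq0] := eqVneq m 0.
  by rewrite mul0r; apply: sup_image_ge0 T_bound _ => x _; exact: normc_ge0.
have m_gt0 : 0 < m by rewrite lt_def m_neq0 m0.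
rewrite mulrC -ler_pdivlMr //; apply: sup_image_le.
  move=> u u1; rewrite ler_pdivlMr // mulrC.
  apply: le_trans (normc_conj_comb_ge _ m0 ha hb) _; rewrite -ip_conj_comb.
  exact: (le_sup_image (f := fun x => normc (ip (T x) x)) T_bound).
by rewrite divr_ge0 ?(ltW m_gt0) // (sup_image_ge0 T_bound) // => x _; exact: normc_ge0.
Qed.

End ConjugateCombination.

End Bounded.
End Adjoint.

Theorem corollary4p2 (R : realType) (V : lmodType R[i]) (ip : V -> V -> R[i])
  (phi psi : R -> R) (A Astar : V -> V) (t : R) :
  is_hilbert ip ->
  {within `[0, 1], continuous phi} ->
  {within `[0, 1], continuous psi} ->
  bounded_op ip A ->
  is_adjoint ip A Astar ->
  t \in `[0, 1] ->
  let m := Num.min `|phi t + psi t| `|phi t - psi t| in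
  let M := Num.max `|phi t + psi t| `|phi t - psi t| in
  let N := opnorm ip (fun x => Astar (A x) + A (Astar x)) in
  4^-1 * m ^+ 2 * N <= (omega_t ip phi psi t A Astar) ^+ 2 /\
  (omega_t ip phi psi t A Astar) ^+ 2 <= 2^-1 * M ^+ 2 * N.
Proof.
move=> ipH _ _ [A_lin [K A_bdd]] adjA _ m M N.
have -> : omega_t ip phi psi t A Astar =
    numrad ip (fun x => (phi t)%:C%C *: A x + (psi t)%:C%C *: Astar x) by [].
set W := numrad ip _; set w := numrad ip A.
have m0 : 0 <= m by rewrite le_min !normr_ge0.
have M0 : 0 <= M by rewrite le_max !normr_ge0.
have w0 : 0 <= w := numrad_ge0 ipH A_bdd.
have mw_le_W : m * w <= W.
  by apply: (numrad_conj_comb_ge ipH adjA A_bdd m0); rewrite /m ge_min lexx ?orbT.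
have W_le_Mw : W <= M * w.
  by apply: (numrad_conj_comb_le ipH adjA A_bdd); rewrite /M le_max lexx ?orbT.
have N_le : N <= 4 * w ^+ 2 := opnorm_le_numrad ipH A_lin adjA A_bdd.
have N_ge : w ^+ 2 <= 2^-1 * N := numrad_sqr_le ipH A_lin adjA A_bdd.
have W0 : 0 <= W := le_trans (mulr_ge0 m0 w0) mw_le_W.
split.
- have := lerXn2r 2 (mulr_ge0 m0 w0) W0 mw_le_W; rewrite exprMn.
  have := ler_wpM2l (sqr_ge0 m) N_le; lra.
- have := lerXn2r 2 W0 (mulr_ge0 M0 w0) W_le_Mw; rewrite exprMn.
  have := ler_wpM2l (sqr_ge0 M) N_ge; lra.
Qed.
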